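(* Fix $\Sigma\in\mathcal{Q}^+_{m,n}$, indices $h,j\in\mathcal{V}_1$ with $h\ge j$, and numbers $\gamma_{kl}\ge0$ for $k,l\in\mathcal{V}_2$, $k\ge l$. Consider $$\min_{\lambda_{hj}\ge0}\ \sum_{k\ge l}\Big[\max\{\lambda_{hj},\gamma_{kl}\}q_{hk,jl}(\Sigma)-\alpha_{hk,jl}\log\max\{\lambda_{hj},\gamma_{kl}\}\Big]+\varepsilon\lambda_{hj}.$$ Let $\tilde\gamma_1<\tilde\gamma_2<\dots<\tilde\gamma_{\tilde u_2}$ ($\tilde u_2\le m_2(m_2+1)/2$) be the distinct values among $\{\gamma_{kl}:k\ge l\}$ in increasing order, and define $\mathcal{C}_u=\{(k,l):k\ge l,\ \gamma_{kl}\le\tilde\gamma_u\}$, $\mathcal{N}_1=\{\tilde\gamma_u:u=1,\dots,\tilde u_2\}$, $\mathcal{N}_2=\{\tilde\lambda_{hj,u}:u=0,1,\dots,\tilde u_2\}$, where $\tilde\lambda_{hj,0}=0$ and, for $u>0$, $$\tilde\lambda_{hj,u}=\frac{\sum_{(k,l)\in\mathcal{C}_u}\alpha_{hk,jl}}{\sum_{(k,l)\in\mathcal{C}_u}q_{hk,jl}(\Sigma)+\varepsilon}.$$ Then this problem admits a solution and all its points of minimum lie in $\mathcal{M}_1=\mathcal{N}_1\cup\mathcal{N}_2$.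
   Context: Let $m_1,m_2,n\in\mathbb{N}$, $m=m_1m_2$, $\mathcal{V}_1=\{1,\dots,m_1\}$, $\mathcal{V}_2=\{1,\dots,m_2\}$, $\varepsilon>0$. $\mathcal{Q}^+_{m,n}$ is the set of matrix pseudo-polynomials $\Sigma(e^{i\vartheta})=S_0+\frac12\sum_{t=1}^n[S_te^{-it\vartheta}+S_t^Te^{it\vartheta}]$ ($S_0=S_0^T$, $S_t\in\mathbb{R}^{m\times m}$) with $\Sigma(e^{i\vartheta})\succ0$ for all $\vartheta\in[-\pi,\pi]$. For $M\in\mathbb{R}^{m\times m}$, $(M)_{hk,jl}$ is the entry in row $(h-1)m_2+k$ and column $(j-1)m_2+l$. $q_{hk,jl}(\Sigma)=\max_{t=0,\dots,n}\max\{|(S_t)_{hk,jl}|,|(S_t)_{hl,jk}|,|(S_t)_{jl,hk}|,|(S_t)_{jk,hl}|\}$. For $h\ge j$, $k\ge l$: $\alpha_{hk,jl}=n+1$ if $h=j,k=l$; $2n+1$ if $h=j,k>l$ or $h>j,k=l$; $4n+2$ if $h>j,k>l$. The objective is taken to be $+\infty$ if some logarithm has argument $0$. *)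

From mathcomp Require Import all_boot all_order all_algebra.
From mathcomp Require Import all_classical all_reals all_analysis.
From mathcomp Require Import complex.
Set Implicit Arguments. Unset Strict Implicit. Unset Printing Implicit Defensive.
Import Order.TTheory GRing.Theory Num.Theory.
Local Open Scope ring_scope.
Local Open Scope complex_scope.

Section Defs.
Variable R : realType.

(* 0-based version of the double index hk |-> (h-1) m2 + k : row h*m2+k *)
Lemma idx_proof (m1 m2 : nat) (h : 'I_m1) (k : 'I_m2) : (h * m2 + k < m1 * m2)%N.
Proof.
case: h k => h /= hm [k /= km].
have : (h.+1 * m2 <= m1 * m2)%N by rewrite leq_mul2r hm orbT.
by rewrite mulSn; apply: leq_trans; rewrite addnC ltn_add2r.
Qed.

Definition idx (m1 m2 : nat) (h : 'I_m1) (k : 'I_m2) : 'I_(m1 * m2) :=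
  Ordinal (idx_proof h k).

Definition ent (m1 m2 : nat) (M : 'M[R]_(m1 * m2)) h k j l : R :=
  M (idx h k) (idx j l).

Definition cexp (x : R) : R[i] := cos x +i* sin x.

Definition Sigma_at (m n : nat) (S : nat -> 'M[R]_m) (theta : R) : 'M[R[i]]_m :=
  map_mx (fun x => x%:C) (S 0%N) +
  (1 / 2%:R) *: \sum_(1 <= t < n.+1)
     (cexp (- (t%:R * theta)) *: map_mx (fun x => x%:C) (S t)
      + cexp (t%:R * theta) *: map_mx (fun x => x%:C) (S t)^T).

Definition posdef (m : nat) (M : 'M[R[i]]_m) : Prop :=
  forall z : 'cV[R[i]]_m, z != 0 -> 0 < ((map_mx conjc z)^T *m M *m z) 0 0.

Definition in_Qplus (m n : nat) (S : nat -> 'M[R]_m) : Prop :=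
  (S 0%N)^T = S 0%N /\
  forall theta : R, - pi <= theta <= pi -> posdef (Sigma_at n S theta).

Definition qf (m1 m2 n : nat) (S : nat -> 'M[R]_(m1 * m2)) h k j l : R :=
  \big[Num.max/0]_(t < n.+1)
     Num.max (Num.max `|ent (S t) h k j l| `|ent (S t) h l j k|)
             (Num.max `|ent (S t) j l h k| `|ent (S t) j k h l|).

Definition alpha (m1 m2 n : nat) (h j : 'I_m1) (k l : 'I_m2) : R :=
  if (h == j) && (k == l) then n.+1%:R
  else if (h == j) || (k == l) then (2 * n).+1%:R
  else (4 * n + 2)%:R.

(* the objective, with value +oo when some logarithm has argument 0 *)
Definition obj_term (x q a : R) : \bar R :=
  if x == 0 then +oo%E else (x * q - a * ln x)%:E.

Definition objective (m1 m2 n : nat) (S : nat -> 'M[R]_(m1 * m2))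
  (eps : R) (h j : 'I_m1) (gamma : 'I_m2 -> 'I_m2 -> R) (lam : R) : \bar R :=
  (\sum_(k < m2) \sum_(l < m2 | (l <= k)%N)
      obj_term (Num.max lam (gamma k l)) (qf n S h k j l) (alpha n h j k l)
   + (eps * lam)%:E)%E.

(* lambda-tilde associated with the distinct value g = gamma-tilde_u:
   C_u = {(k,l) : k >= l, gamma_kl <= g} *)
Definition lam_tilde (m1 m2 n : nat) (S : nat -> 'M[R]_(m1 * m2))
  (eps : R) (h j : 'I_m1) (gamma : 'I_m2 -> 'I_m2 -> R) (g : R) : R :=
  (\sum_(k < m2) \sum_(l < m2 | (l <= k)%N && (gamma k l <= g)) alpha n h j k l)
  / (\sum_(k < m2) \sum_(l < m2 | (l <= k)%N && (gamma k l <= g)) qf n S h k j l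
     + eps).

Definition in_M1 (m1 m2 n : nat) (S : nat -> 'M[R]_(m1 * m2))
  (eps : R) (h j : 'I_m1) (gamma : 'I_m2 -> 'I_m2 -> R) (x : R) : Prop :=
  (exists k l : 'I_m2, (l <= k)%N /\ x = gamma k l)
  \/ x = 0
  \/ (exists k l : 'I_m2, (l <= k)%N /\
        x = lam_tilde n S eps h j gamma (gamma k l)).

End Defs.

From mathcomp Require Import all_boot all_order all_algebra.
From mathcomp Require Import all_classical all_reals all_analysis.
From mathcomp Require Import complex.
From mathcomp Require Import ring lra.
Import Order.TTheory GRing.Theory Num.Theory.
Local Open Scope ring_scope.

(* Between two consecutive values of gamma the objective is K + A x - B ln x,
   where A > 0 and B >= 0 are read off the pairs whose gamma lies below; it
   decreases up to B / A, which is the lambda-tilde of those pairs, and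
   increases afterwards.  Hence from any lambda >= 0 the objective strictly
   decreases on the way to the nearer of B / A and the neighbouring value of
   gamma, both of which lie in M_1.  So the minimum over the finite set M_1 is
   a global minimum, and no minimizer lies outside M_1. *)

Set Implicit Arguments. Unset Strict Implicit. Unset Printing Implicit Defensive.

Lemma big_id_or_term (T : Type) (op : T -> T -> T) (x : T) (I : finType)
    (P : pred I) (F : I -> T) :
  (forall u v, op u v = u \/ op u v = v) ->
  \big[op/x]_(i | P i) F i = x \/ exists2 i, P i & \big[op/x]_(i | P i) F i = F i.
Proof.
move=> op_sel.
apply: (big_ind (fun y => y = x \/ exists2 i, P i & y = F i)); first by left.
  by move=> u v Ku Kv; case: (op_sel u v) => ->.
by move=> i Pi; right; exists i.
Qed.

Lemma max_either d (T : orderType d) (u v : T) :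
  Order.max u v = u \/ Order.max u v = v.
Proof. by case: leP; auto. Qed.

Lemma min_either d (T : orderType d) (u v : T) :
  Order.min u v = u \/ Order.min u v = v.
Proof. by case: leP; auto. Qed.

Section LinLog.
Variable R : realType.

Lemma ln_lt_subr1 (x : R) : 0 < x -> x != 1 -> ln x < x - 1.
Proof.
move=> x_gt0 x_neq1.
have := @expR_gt1Dx R (x - 1); rewrite subrKC subr_eq0 => /(_ x_neq1) lt_exp.
by rewrite -[x - 1]expRK ltr_ln ?posrE ?expR_gt0.
Qed.

Lemma mul_lnB_lt (x y : R) : 0 < x -> 0 < y -> x != y ->
  x * (ln y - ln x) < y - x.
Proof.
move=> x_gt0 y_gt0 xy.
have yx_neq1 : y / x != 1 by apply/eqP => /divr1_eq yx; rewrite yx eqxx in xy.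
have -> : y - x = x * (y / x - 1).
  by rewrite mulrBr mulr1 mulrCA divff ?gt_eqF // mulr1.
by rewrite -ln_div ?posrE // ltr_pM2l // ln_lt_subr1 ?divr_gt0.
Qed.

Definition linlog (A B x : R) := A * x - B * ln x.

Lemma linlog_lt_incr (A B x y : R) : 0 < A -> 0 <= B -> B / A <= x -> x < y ->
  0 < x \/ B = 0 -> linlog A B x < linlog A B y.
Proof.
move=> A_gt0 B_ge0 crit_le_x xy [x_gt0|->]; last first.
  by rewrite /linlog !mul0r !subr0 ltr_pM2l.
have y_gt0 := lt_trans x_gt0 xy.
have lnB_gt0 : 0 < ln y - ln x by rewrite subr_gt0 ltr_ln ?posrE.
have B_le : B <= A * x by rewrite -ler_pdivrMl // mulrC.
have := mul_lnB_lt x_gt0 y_gt0 (negbT (lt_eqF xy)).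
rewrite /linlog; nra.
Qed.

Lemma linlog_lt_decr (A B x y : R) : 0 < A -> 0 < x -> x < y -> y <= B / A ->
  linlog A B y < linlog A B x.
Proof.
move=> A_gt0 x_gt0 xy y_le_crit.
have y_gt0 := lt_trans x_gt0 xy.
have lnB_gt0 : 0 < ln y - ln x by rewrite subr_gt0 ltr_ln ?posrE.
have B_ge : A * y <= B by rewrite -ler_pdivlMl // mulrC.
have := mul_lnB_lt y_gt0 x_gt0 (negbT (gt_eqF xy)).
rewrite /linlog; nra.
Qed.

Lemma sum_linlog (I : finType) (Q : pred I) (A B : I -> R) (x : R) :
  \sum_(i | Q i) linlog (A i) (B i) x =
  linlog (\sum_(i | Q i) A i) (\sum_(i | Q i) B i) x.
Proof. by rewrite /linlog big_split /= sumrN -!mulr_suml. Qed.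

End LinLog.

Lemma seq_argmin (T : choiceType) (d : Order.disp_t) (U : orderType d)
    (f : T -> U) (x : T) (s : seq T) :
  exists2 c, c \in x :: s & forall y, y \in x :: s -> (f c <= f y)%O.
Proof.
pose x' : seq_sub (x :: s) := SeqSub (mem_head x s).
case: (@arg_minP _ _ _ x' predT (fun c => f (val c)) isT) => c _ c_min.
by exists (val c) => [|y ys]; [exact: valP | exact: (c_min (SeqSub ys))].
Qed.

Section MaxLogObjective.
Variables (R : realType) (I : finType) (P : pred I) (g q a : I -> R) (eps : R).
Hypotheses (eps_gt0 : 0 < eps) (q_ge0 : forall i, 0 <= q i)
  (a_gt0 : forall i, 0 < a i) (g_ge0 : forall i, P i -> 0 <= g i).

Definition obj (lam : R) : \bar R :=
  (\sum_(i | P i) obj_term (Num.max lam (g i)) (q i) (a i) + (eps * lam)%:E)%E.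

Definition objr (lam : R) : R :=
  \sum_(i | P i) linlog (q i) (a i) (Num.max lam (g i)) + eps * lam.

Definition coefA (mu : R) := \sum_(i | P i && (g i <= mu)) q i + eps.
Definition coefB (mu : R) := \sum_(i | P i && (g i <= mu)) a i.
Definition coefK (mu : R) :=
  \sum_(i | P i && ~~ (g i <= mu)) linlog (q i) (a i) (g i).
(* For [mu] a value of gamma, this is the paper's lambda-tilde of that value. *)
Definition lam_crit (mu : R) := coefB mu / coefA mu.

Definition candidate (c : R) : Prop :=
  (exists2 i, P i & c = g i) \/ c = 0 \/ (exists2 i, P i & c = lam_crit (g i)).

Lemma coefA_gt0 mu : 0 < coefA mu.
Proof. by rewrite ltr_wpDl // sumr_ge0. Qed.

Lemma lam_crit_ge0 mu : 0 <= lam_crit mu.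
Proof.
by rewrite divr_ge0 ?(ltW (coefA_gt0 mu)) // sumr_ge0 // => i _; exact: ltW.
Qed.

Lemma lam_crit_cases mu :
  (coefB mu = 0 /\ forall i, P i -> mu < g i) \/ 0 < lam_crit mu.
Proof.
case: (pickP (fun i => P i && (g i <= mu))) => [i /andP[Pi gi] | none].
  right; rewrite divr_gt0 ?coefA_gt0 // /coefB (bigD1 i) ?Pi ?gi //=.
  by rewrite ltr_pwDl ?a_gt0 // sumr_ge0 // => k _; exact: ltW.
left; split; first by rewrite /coefB big_pred0.
by move=> i Pi; have := none i; rewrite /= Pi /= ltNge => ->.
Qed.

Lemma candidate_lam_crit mu : candidate (lam_crit mu).
Proof.
case: (pickP (fun i => P i && (g i <= mu))) => [i0 Pi0 | none]; last first.
  by right; left; rewrite /lam_crit /coefB big_pred0 // mul0r.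
case: (@arg_maxP _ _ _ i0 (fun i => P i && (g i <= mu)) g Pi0).
move=> i /andP[Pi gi] i_max.
right; right; exists i => //.
have same i' : P i' && (g i' <= mu) = P i' && (g i' <= g i).
  case Pi': (P i') => //=; apply/idP/idP => [gi'|gi']; last exact: le_trans gi.
  by apply: i_max; rewrite Pi' gi'.
by rewrite /lam_crit /coefA /coefB !(eq_bigl _ _ same).
Qed.

Lemma candidate_ge0 c : candidate c -> 0 <= c.
Proof. by case=> [[i Pi ->]|[->|[i Pi ->]]]; rewrite ?g_ge0 ?lam_crit_ge0. Qed.

Lemma obj_fin x : (forall i, P i -> 0 < Num.max x (g i)) -> obj x = (objr x)%:E.
Proof.
move=> max_gt0; rewrite /obj /objr EFinD -sumEFin; congr (_ + _)%E.
by apply: eq_bigr => i Pi; rewrite /obj_term gt_eqF ?max_gt0 // /linlog mulrC.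
Qed.

Lemma obj_pos x : 0 < x -> obj x = (objr x)%:E.
Proof. by move=> x_gt0; apply: obj_fin => i _; rewrite lt_max x_gt0. Qed.

Lemma objr_bracket mu x :
  (forall i, P i -> g i <= mu -> g i <= x) ->
  (forall i, P i -> mu < g i -> x <= g i) ->
  objr x = coefK mu + linlog (coefA mu) (coefB mu) x.
Proof.
move=> below above; rewrite /objr (bigID (fun i => g i <= mu)) /=.
rewrite (eq_bigr (fun i => linlog (q i) (a i) x)) => [|i /andP[Pi gi]]; last first.
  by rewrite max_l // below.
rewrite [X in _ + X + _](eq_bigr (fun i => linlog (q i) (a i) (g i))); last first.
  by move=> i /andP[Pi gi]; rewrite max_r // above // ltNge.
by rewrite sum_linlog /coefK /coefA /coefB /linlog; ring.
Qed.

Lemma objr_self mu : objr mu = coefK mu + linlog (coefA mu) (coefB mu) mu.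
Proof. by apply: objr_bracket => // i _ /ltW. Qed.

Lemma descend_below mu : 0 < mu -> lam_crit mu <= mu ->
  exists c, candidate c /\ (c = mu \/ (obj c < obj mu)%E).
Proof.
move=> mu_gt0 crit_le_mu.
pose c := \big[Num.max/lam_crit mu]_(i | P i && (g i <= mu)) g i.
have crit_le_c : lam_crit mu <= c by exact: bigmax_ge_id.
have below_c i : P i -> g i <= mu -> g i <= c.
  by move=> Pi gi; apply: le_bigmax_cond; rewrite Pi gi.
have c_le_mu : c <= mu by apply: bigmax_le => // i /andP[].
exists c; split.
  have : c = lam_crit mu \/ exists2 i, P i && (g i <= mu) & c = g i.
    by apply: big_id_or_term; exact: max_either.
  case=> [->|[i /andP[Pi _] ->]].
    exact: candidate_lam_crit.
  by left; exists i.
have [->|c_neq_mu] := eqVneq c mu; [by left | right].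
have c_lt_mu : c < mu by rewrite lt_neqAle c_neq_mu c_le_mu.
have [obj_c c_gt0_or_B0] : obj c = (objr c)%:E /\ (0 < c \/ coefB mu = 0).
  case: (lam_crit_cases mu) => [[B0 above]|crit_gt0].
    split; [apply: obj_fin => i Pi | by right].
    by rewrite lt_max (lt_trans mu_gt0 (above i Pi)) orbT.
  have c_gt0 := lt_le_trans crit_gt0 crit_le_c.
  by split; [exact: obj_pos | left].
rewrite obj_c obj_pos // (objr_self mu) (@objr_bracket mu c) //; last first.
  by move=> i _ /ltW; exact: le_trans (ltW c_lt_mu).
rewrite lte_fin ltrD2l; apply: linlog_lt_incr => //; first exact: coefA_gt0.
by rewrite sumr_ge0 // => i _; exact: ltW.
Qed.

Lemma descend_above mu : 0 < mu -> mu < lam_crit mu ->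
  exists c, candidate c /\ (obj c < obj mu)%E.
Proof.
move=> mu_gt0 mu_lt_crit.
pose c := \big[Num.min/lam_crit mu]_(i | P i && (mu < g i)) g i.
have c_le_crit : c <= lam_crit mu by exact: bigmin_le_id.
have above_c i : P i -> mu < g i -> c <= g i.
  by move=> Pi gi; apply: bigmin_le_cond; rewrite Pi gi.
have mu_lt_c : mu < c by apply: lt_bigmin => // i /andP[].
exists c; split.
  have : c = lam_crit mu \/ exists2 i, P i && (mu < g i) & c = g i.
    by apply: big_id_or_term; exact: min_either.
  case=> [->|[i /andP[Pi _] ->]].
    exact: candidate_lam_crit.
  by left; exists i.
rewrite !obj_pos ?(lt_trans mu_gt0 mu_lt_c) // (objr_self mu).
rewrite (@objr_bracket mu c) // => [|i _ gi]; last exact: le_trans gi (ltW mu_lt_c).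
rewrite lte_fin ltrD2l; apply: linlog_lt_decr => //; exact: coefA_gt0.
Qed.

Lemma improve_to_candidate mu : 0 <= mu ->
  exists c, candidate c /\ (c = mu \/ (obj c < obj mu)%E).
Proof.
move=> mu_ge0; have [->|mu_neq0] := eqVneq mu 0.
  by exists 0; split; [right; left | left].
have mu_gt0 : 0 < mu by rewrite lt_neqAle eq_sym mu_neq0.
have [|mu_lt_crit] := leP (lam_crit mu) mu; first exact: descend_below.
have [c [c_cand lt_mu]] := descend_above mu_gt0 mu_lt_crit.
by exists c; split; [|right].
Qed.

Definition candidates : seq R :=
  0 :: [seq g i | i <- enum P] ++ [seq lam_crit (g i) | i <- enum P].

Lemma candidateP c : candidate c <-> c \in candidates.
Proof.
rewrite inE mem_cat; split.
  case=> [[i Pi ->]|[->|[i Pi ->]]]; rewrite ?eqxx //.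
    by rewrite (map_f g) ?orbT // mem_enum.
  by rewrite (map_f (fun i => lam_crit (g i))) ?orbT // mem_enum.
case/orP=> [/eqP->|/orP[]]; first by right; left.
  by case/seq.mapP=> i; rewrite mem_enum => Pi ->; left; exists i.
by case/seq.mapP=> i; rewrite mem_enum => Pi ->; right; right; exists i.
Qed.

Lemma obj_has_min :
  exists lam, 0 <= lam /\ forall mu, 0 <= mu -> (obj lam <= obj mu)%E.
Proof.
have [c c_cand c_min] := seq_argmin obj 0 (behead candidates).
exists c; split; first by apply/candidate_ge0/candidateP.
move=> mu mu_ge0.
have [c' [/candidateP c'_cand c'_le]] := improve_to_candidate mu_ge0.
by apply: le_trans (c_min _ c'_cand) _; case: c'_le => [->|/ltW].
Qed.

Lemma obj_argmin_candidate lam : 0 <= lam ->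
  (forall mu, 0 <= mu -> (obj lam <= obj mu)%E) -> candidate lam.
Proof.
move=> lam_ge0 lam_min.
have [c [c_cand [<- //|c_lt]]] := improve_to_candidate lam_ge0.
by have := lam_min c (candidate_ge0 c_cand); rewrite leNgt c_lt.
Qed.

End MaxLogObjective.

Lemma qf_ge0 (R : realType) (m1 m2 n : nat) (S : nat -> 'M[R]_(m1 * m2)) h k j l :
  0 <= qf n S h k j l.
Proof. exact: bigmax_ge_id. Qed.

Lemma alpha_gt0 (R : realType) (m1 m2 n : nat) (h j : 'I_m1) (k l : 'I_m2) :
  0 < alpha R n h j k l.
Proof. by rewrite /alpha; case: ifP => _; [|case: ifP => _]; rewrite ltr0n ?addn2. Qed.

Unset Implicit Arguments.

Theorem proposition5 (R : realType) (m1 m2 n : nat) (eps : R)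
  (S : nat -> 'M[R]_(m1 * m2)) (h j : 'I_m1) (gamma : 'I_m2 -> 'I_m2 -> R) :
  (0 < m1)%N -> (0 < m2)%N -> (0 < n)%N -> 0 < eps ->
  in_Qplus n S -> (j <= h)%N ->
  (forall k l : 'I_m2, (l <= k)%N -> 0 <= gamma k l) ->
  (exists lam : R, 0 <= lam /\
     forall mu : R, 0 <= mu ->
       (objective n S eps h j gamma lam <= objective n S eps h j gamma mu)%E)
  /\
  (forall lam : R, 0 <= lam ->
     (forall mu : R, 0 <= mu ->
       (objective n S eps h j gamma lam <= objective n S eps h j gamma mu)%E) ->
     in_M1 n S eps h j gamma lam).
Proof.
move=> _ _ _ eps_gt0 _ _ gamma_ge0.
pose P (p : 'I_m2 * 'I_m2) := (p.2 <= p.1)%N.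
pose g (p : 'I_m2 * 'I_m2) := gamma p.1 p.2.
pose q (p : 'I_m2 * 'I_m2) := qf n S h p.1 j p.2.
pose a (p : 'I_m2 * 'I_m2) := alpha R n h j p.1 p.2.
have objE lam : objective n S eps h j gamma lam = obj P g q a eps lam.
  by rewrite /objective /obj pair_big_dep.
have critE x : lam_tilde n S eps h j gamma x = lam_crit P g q a eps x.
  by rewrite /lam_tilde /lam_crit /coefA /coefB !pair_big_dep.
have q_ge0 p : 0 <= q p by exact: qf_ge0.
have a_gt0 p : 0 < a p by exact: alpha_gt0.
have g_ge0 p : P p -> 0 <= g p by exact: gamma_ge0.
split.
  have [lam [lam_ge0 lam_min]] := obj_has_min eps_gt0 q_ge0 a_gt0 g_ge0.
  by exists lam; split => // mu; rewrite !objE; exact: lam_min.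
move=> lam lam_ge0 lam_min.
have : candidate P g q a eps lam.
  apply: (obj_argmin_candidate eps_gt0 q_ge0 a_gt0 g_ge0 lam_ge0) => mu.
  by rewrite -!objE; exact: lam_min.
case=> [[[k l] kl ->]|[->|[[k l] kl ->]]]; [left | right; left | right; right].
- by exists k, l.
- by [].
- by exists k, l; rewrite critE.
Qed.
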